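(* Let $(X,d,\preccurlyeq)$ be a preordered $s$-regular $b$-metric space, let $x_0\in X$, and let $\mathcal{F}=\{f_\alpha\}_{\alpha\in\mathcal{I}}$ ($\mathcal I$ nonempty) be a concordantly isotone family of self mappings of $X$ with $f_\alpha(x_0)\preccurlyeq x_0$ for all $\alpha\in\mathcal{I}$. Suppose that for every chain $C\in\mathcal{C}_1(x_0,\mathcal{F},\preccurlyeq)$ there exists $w\in X$ which is a common lower bound of the chains $f_\alpha(C)$, $\alpha\in\mathcal{I}$, and there exist $z\in X$ and $\beta\in\mathcal{I}$ such that for all $\alpha\in\mathcal{I}$ and all $i\in\mathbb{N}$, $f_\alpha(w)\preccurlyeq w\preccurlyeq f_\beta^i(z)$, and $d(f_\alpha^i(w),f_\beta^i(z))\to 0$ as $i\to\infty$ for all $\alpha\in\mathcal I$. Then the set $\mathrm{ComFix}(\mathcal{F})\cap O_X(x_0)$ is nonempty and contains a minimal element.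
   Context: A $b$-metric space with coefficient $s\ge 1$ is a nonempty set $X$ with $d:X\times X\to[0,\infty)$ such that for all $x,y,z$: $d(x,y)=0$ iff $x=y$; $d(x,y)=d(y,x)$; $d(x,y)\le s[d(x,z)+d(z,y)]$. A preorder is a reflexive transitive relation $\preccurlyeq$; $x\succcurlyeq y$ means $y\preccurlyeq x$; $x\prec y$ means $x\preccurlyeq y$ and $x\ne y$. A preordered $s$-regular $b$-metric space $(X,d,\preccurlyeq)$ is a $b$-metric space with coefficient $s$ with a preorder such that $x\preccurlyeq y\preccurlyeq z$ implies $\max\{d(x,y),d(y,z)\}\le s^2d(x,z)$. A chain is a subset any two elements of which are comparable. $f^i$ is the $i$-th iterate. A family $\mathcal{F}=\{f_\alpha\}_{\alpha\in\mathcal I}$ of self maps is concordantly isotone if for all $x,y\in X$, $x\prec y$ implies $f_\alpha(x)\preccurlyeq f_\beta(y)$ for all $\alpha,\beta\in\mathcal{I}$. $O_X(x_0)=\{x:x\preccurlyeq x_0\}$. $\mathcal{C}_1(\mathcal F,\preccurlyeq)$ is the set of chains $C\subset\bigcup_{\alpha}f_\alpha(X)$ such that $f_\alpha(x)\preccurlyeq x$ for all $x\in C,\alpha\in\mathcal I$, and for all $x,y\in C$, $x\prec y$ implies $x\preccurlyeq f_\alpha(y)$ for all $\alpha$. $\mathcal{C}_1(x_0,\mathcal F,\preccurlyeq)=\{C\in\mathcal C_1(\mathcal F,\preccurlyeq): C\subset O_X(x_0)\cap\bigcup_\alpha f_\alpha(O_X(x_0))\}$. $\mathrm{ComFix}(\mathcal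 F)=\{x: f_\alpha(x)=x\ \forall\alpha\in\mathcal I\}$. A common lower bound of the sets $f_\alpha(C)$ is $w$ with $w\preccurlyeq f_\alpha(x)$ for all $x\in C$, $\alpha\in\mathcal I$. A minimal element of $A$ is $w\in A$ with no $u\in A$ such that $u\prec w$. *)

From Stdlib Require Import Reals.
Open Scope R_scope.

Section Defs.
Context {X : Type}.

Definition is_b_metric (s : R) (d : X -> X -> R) : Prop :=
  1 <= s /\
  (forall x y, 0 <= d x y) /\
  (forall x y, d x y = 0 <-> x = y) /\
  (forall x y, d x y = d y x) /\
  (forall x y z, d x y <= s * (d x z + d z y)).

Definition is_preorder (le : X -> X -> Prop) : Prop :=
  (forall x, le x x) /\ (forall x y z, le x y -> le y z -> le x z).

Definition strict (le : X -> X -> Prop) (x y : X) : Prop := le x y /\ x <> y.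

Definition preordered_s_regular_b_metric (s : R) (d : X -> X -> R)
  (le : X -> X -> Prop) : Prop :=
  is_b_metric s d /\ is_preorder le /\
  (forall x y z, le x y -> le y z -> Rmax (d x y) (d y z) <= s ^ 2 * d x z).

Definition is_chain (le : X -> X -> Prop) (C : X -> Prop) : Prop :=
  forall x y, C x -> C y -> le x y \/ le y x.

Definition concordantly_isotone {I : Type} (le : X -> X -> Prop)
  (f : I -> X -> X) : Prop :=
  forall x y, strict le x y -> forall a b, le (f a x) (f b y).

Definition lower_set (le : X -> X -> Prop) (x0 : X) : X -> Prop :=
  fun x => le x x0.

Definition C1 {I : Type} (le : X -> X -> Prop) (f : I -> X -> X)
  (C : X -> Prop) : Prop :=
  is_chain le C /\
  (forall x, C x -> exists a y, x = f a y) /\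
  (forall x, C x -> forall a, le (f a x) x) /\
  (forall x y, C x -> C y -> strict le x y -> forall a, le x (f a y)).

Definition C1_at {I : Type} (le : X -> X -> Prop) (f : I -> X -> X)
  (x0 : X) (C : X -> Prop) : Prop :=
  C1 le f C /\
  (forall x, C x -> lower_set le x0 x /\
     exists a y, lower_set le x0 y /\ x = f a y).

Definition ComFix {I : Type} (f : I -> X -> X) : X -> Prop :=
  fun x => forall a, f a x = x.

Definition common_lower_bound {I : Type} (le : X -> X -> Prop)
  (f : I -> X -> X) (C : X -> Prop) (w : X) : Prop :=
  forall x a, C x -> le w (f a x).

Definition minimal_in (le : X -> X -> Prop) (A : X -> Prop) (w : X) : Prop :=
  A w /\ ~ (exists u, A u /\ strict le u w).

End Defs.

(* An s-regular preorder is antisymmetric (u <= v <= u forces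
   d(u, v) <= s^2 d(u, u) = 0), so Zorn's lemma yields a minimal common fixed
   point below x0 once every nonempty chain of such points has a lower bound
   among them.  Such a chain lies in C_1(x0, F), and the hypothesis gives a
   common lower bound w which is itself a common fixed point: the iterates
   f_a^i w lie below f_a w <= w and the f_b^i z above w, so regularity gives
   d(f_a w, w) <= s^4 d(f_a^i w, f_b^i z) -> 0.  Applied to the chain {f_c x0}
   the same argument provides a first common fixed point below x0. *)

From Stdlib Require Import Reals Lra Lia Classical.
From mathcomp Require boolp classical_sets.
Open Scope R_scope.

Lemma Un_cv_0_lower_bound (u : nat -> R) (K c : R) :
  Un_cv u 0 -> 0 < K -> (forall n, c <= K * u (S n)) -> c <= 0.
Proof.
  intros Hu HK Hc.
  apply Rnot_lt_le; intros Hc0.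
  destruct (Hu (c / K)) as [N HN]; [apply Rdiv_lt_0_compat; lra|].
  specialize (HN (S N) ltac:(lia)).
  unfold R_dist in HN; rewrite Rminus_0_r in HN.
  pose proof (Rle_abs (u (S N))).
  assert (K * u (S N) < c).
  { apply (Rmult_lt_reg_r (/ K)); [apply Rinv_0_lt_compat; lra|].
    rewrite (Rmult_comm K), Rmult_assoc, Rinv_r, Rmult_1_r by lra.
    unfold Rdiv in HN; lra. }
  specialize (Hc N); lra.
Qed.

Lemma Zorn_minimal {X : Type} (le : X -> X -> Prop) (A : X -> Prop) :
  is_preorder le ->
  (forall u v, le u v -> le v u -> u = v) ->
  (exists x, A x) ->
  (forall C : X -> Prop, (forall x, C x -> A x) -> is_chain le C ->
     (exists x, C x) -> exists w, A w /\ forall x, C x -> le w x) ->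
  exists w, minimal_in le A w.
Proof.
  intros [Hrefl Htrans] Hanti [x0 Hx0] Hchain.
  pose (ge := fun p q : {x | A x} => boolp.asbool (le (proj1_sig q) (proj1_sig p))).
  destruct (@classical_sets.Zorn _ ge) as [[w Hw] Hmax].
  - intros p; apply boolp.asboolT, Hrefl.
  - intros p q r Hpq Hqr; apply boolp.asboolT.
    apply boolp.asboolW in Hpq; apply boolp.asboolW in Hqr; eauto.
  - intros [p Hp] [q Hq] Hpq Hqp.
    apply boolp.asboolW in Hpq; apply boolp.asboolW in Hqp; simpl in *.
    assert (p = q) as <- by auto.
    f_equal; apply boolp.Prop_irrelevance.
  - intros P HP.
    set (C := fun x => exists p, P p /\ proj1_sig p = x).
    destruct (classic (exists p, P p)) as [[p Hp]|Hempty].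
    + destruct (Hchain C) as [w [Hw Hlow]].
      * intros x [[y Hy] [_ <-]]; exact Hy.
      * intros x y [p' [Hp' <-]] [q [Hq <-]].
        destruct (HP p' q Hp' Hq) as [H|H]; apply boolp.asboolW in H; auto.
      * exists (proj1_sig p); exists p; auto.
      * exists (exist _ w Hw); intros r Hr; apply boolp.asboolT, Hlow; exists r; auto.
    + exists (exist _ x0 Hx0); intros r Hr; exfalso; eauto.
  - exists w; split; [exact Hw|].
    intros [u [Hu [Huw Hne]]].
    apply Hne, (f_equal (@proj1_sig _ _) (Hmax (exist _ u Hu) (boolp.asboolT Huw))).
Qed.

Section RegularSpace.
Context {X : Type} (s : R) (d : X -> X -> R) (le : X -> X -> Prop).
Hypothesis Hreg : preordered_s_regular_b_metric s d le.

Lemma regular_antisym (u v : X) : le u v -> le v u -> u = v.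
Proof.
  destruct Hreg as [[_ [Hpos [Hzero _]]] [_ Hregular]]; intros Huv Hvu.
  pose proof (Hregular u v u Huv Hvu) as H.
  rewrite (proj2 (Hzero u u) eq_refl), Rmult_0_r in H.
  apply Hzero; pose proof (Rmax_l (d u v) (d v u)); pose proof (Hpos u v); lra.
Qed.

Lemma regular_dist_inner_le (u v w z : X) :
  le u v -> le v w -> le w z -> d v w <= s ^ 2 * (s ^ 2 * d u z).
Proof.
  destruct Hreg as [[Hs _] [[_ Htrans] Hregular]]; intros Huv Hvw Hwz.
  pose proof (Hregular u v w Huv Hvw) as H1.
  pose proof (Hregular u w z (Htrans _ _ _ Huv Hvw) Hwz) as H2.
  pose proof (Rmax_r (d u v) (d v w)); pose proof (Rmax_l (d u w) (d w z)).
  apply (Rle_trans _ (s ^ 2 * d u w)); [lra|].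
  apply Rmult_le_compat_l; [apply pow_le; lra|lra].
Qed.

Context (I : Type) (f : I -> X -> X).
Hypothesis Hiso : concordantly_isotone le f.

Lemma isotone_le (a : I) (x y : X) : le x y -> le (f a x) (f a y).
Proof.
  destruct Hreg as [_ [[Hrefl _] _]]; intros Hxy.
  destruct (classic (x = y)) as [<-|Hne]; [apply Hrefl|apply Hiso; split; auto].
Qed.

Lemma iter_le_first (a : I) (w : X) :
  le (f a w) w -> forall k, le (Nat.iter (S k) (f a) w) (f a w).
Proof.
  destruct Hreg as [_ [[Hrefl Htrans] _]]; intros Hw k.
  induction k as [|k IH]; [apply Hrefl|].
  apply (Htrans _ _ _ (isotone_le a _ _ IH)), (isotone_le a _ _ Hw).
Qed.

Lemma comfix_of_iterates_close (w z : X) (b : I) :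
  (forall a (i : nat), (1 <= i)%nat -> le (f a w) w /\ le w (Nat.iter i (f b) z)) ->
  (forall a, Un_cv (fun i => d (Nat.iter i (f a) w) (Nat.iter i (f b) z)) 0) ->
  ComFix f w.
Proof.
  destruct Hreg as [[Hs [Hpos [Hzero _]]] _]; intros Hw Hcv a.
  assert (Hfw : le (f a w) w) by (apply (Hw a 1%nat); lia).
  apply Hzero, Rle_antisym; [|apply Hpos].
  assert (Hs2 : 0 < s ^ 2) by (apply pow_lt; lra).
  apply (Un_cv_0_lower_bound _ (s ^ 2 * s ^ 2) _ (Hcv a)); [nra|].
  intros n; rewrite Rmult_assoc.
  apply regular_dist_inner_le.
  - apply iter_le_first, Hfw.
  - exact Hfw.
  - apply (Hw a); lia.
Qed.

Lemma C1_at_singleton (x0 : X) (c : I) :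
  (forall a, le (f a x0) x0) -> C1_at le f x0 (fun x => x = f c x0).
Proof.
  destruct Hreg as [_ [[Hrefl Htrans] _]]; intros Hx0.
  split; [split; [|split; [|split]]|].
  - intros x y -> ->; left; apply Hrefl.
  - intros x ->; eauto.
  - intros x -> a; destruct (classic (f c x0 = x0)) as [Hc|Hc].
    + rewrite Hc; apply Hx0.
    + apply Hiso; split; [apply Hx0|exact Hc].
  - intros x y -> -> [_ Hne]; congruence.
  - intros x ->; split; [apply Hx0|].
    exists c, x0; split; [apply Hrefl|reflexivity].
Qed.

Lemma C1_at_of_comfix_chain (x0 : X) (C : X -> Prop) :
  inhabited I -> is_chain le C ->
  (forall x, C x -> ComFix f x /\ lower_set le x0 x) -> C1_at le f x0 C.
Proof.
  destruct Hreg as [_ [[Hrefl _] _]]; intros [c] Hchain HC.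
  split; [split; [exact Hchain|split; [|split]]|].
  - intros x Hx; exists c, x; symmetry; apply HC, Hx.
  - intros x Hx a; rewrite (proj1 (HC x Hx) a); apply Hrefl.
  - intros x y _ Hy [Hxy _] a; rewrite (proj1 (HC y Hy) a); exact Hxy.
  - intros x Hx; split; [apply HC, Hx|].
    exists c, x; split; [apply HC, Hx|symmetry; apply HC, Hx].
Qed.

Lemma common_lower_bound_lower_set (x0 w x : X) (C : X -> Prop) :
  inhabited I -> C1_at le f x0 C -> C x -> common_lower_bound le f C w ->
  lower_set le x0 w.
Proof.
  destruct Hreg as [_ [[_ Htrans] _]]; intros [c] [[_ [_ [Hdesc _]]] Hbelow] Hx Hw.
  apply (Htrans _ (f c x)); [apply Hw, Hx|].
  apply (Htrans _ x); [apply Hdesc, Hx|apply Hbelow, Hx].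
Qed.

End RegularSpace.

Theorem theorem3p1 (X : Type) (s : R) (d : X -> X -> R) (le : X -> X -> Prop)
  (I : Type) (f : I -> X -> X) (x0 : X) :
  preordered_s_regular_b_metric s d le ->
  inhabited I ->
  concordantly_isotone le f ->
  (forall a, le (f a x0) x0) ->
  (forall C : X -> Prop, C1_at le f x0 C ->
     exists w : X, common_lower_bound le f C w /\
       exists (z : X) (b : I),
         (forall a (i : nat), (1 <= i)%nat ->
            le (f a w) w /\ le w (Nat.iter i (f b) z)) /\
         (forall a, Un_cv (fun i => d (Nat.iter i (f a) w) (Nat.iter i (f b) z)) 0)) ->
  (exists x, ComFix f x /\ lower_set le x0 x) /\
  exists w, minimal_in le (fun x => ComFix f x /\ lower_set le x0 x) w.
Proof.
  intros Hreg HI Hiso Hx0 Hchains.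
  assert (Hfix : forall C, C1_at le f x0 C ->
            exists w, common_lower_bound le f C w /\ ComFix f w).
  { intros C HC; destruct (Hchains C HC) as [w [Hw [z [b [Hzw Hcv]]]]].
    exists w; split; [exact Hw|].
    exact (comfix_of_iterates_close s d le Hreg I f Hiso w z b Hzw Hcv). }
  assert (Hex : exists x, ComFix f x /\ lower_set le x0 x).
  { pose proof HI as [c].
    pose proof (C1_at_singleton s d le Hreg I f Hiso x0 c Hx0) as HC.
    destruct (Hfix _ HC) as [w [Hw Hwfix]].
    exists w; split; [exact Hwfix|].
    exact (common_lower_bound_lower_set s d le Hreg I f x0 w (f c x0) _ HI HC eq_refl Hw). }
  split; [exact Hex|].
  apply Zorn_minimal; [apply Hreg|exact (regular_antisym s d le Hreg)|exact Hex|].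
  intros C HCA Hchain [x Hx].
  pose proof (C1_at_of_comfix_chain s d le Hreg I f x0 C HI Hchain HCA) as HC.
  destruct (Hfix C HC) as [w [Hw Hwfix]].
  exists w; split.
  { split; [exact Hwfix|].
    exact (common_lower_bound_lower_set s d le Hreg I f x0 w x C HI HC Hx Hw). }
  intros y Hy; destruct HI as [c].
  rewrite <- (proj1 (HCA y Hy) c); apply Hw, Hy.
Qed.
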